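(* Let $q\ge 2$ and $n\ge 1$ be integers, $N=\{1,\dots,n\}$, $F^c=\{-\tfrac{q-1}{2},-\tfrac{q-3}{2},\dots,\tfrac{q-3}{2},\tfrac{q-1}{2}\}$ and $\Omega=(F^c)^N$. For each subset $A\subset N$ with $|A|\ge 2$ let $J_A\ge 0$ be given, and define $H_\gamma=-\sum_{A}J_A\,\delta_{(\sigma^A)_\gamma}$, where for $A=\{i_1,\dots,i_k\}$, $\delta_{(\sigma^A)_\gamma}=1$ if $(\sigma_{i_1})_\gamma=\dots=(\sigma_{i_k})_\gamma$ and $0$ otherwise. Let $Z_\gamma=\exp(-H_\gamma)=\prod_A x_A^{\delta_{(\sigma^A)_\gamma}}$ with $x_A=e^{J_A}$, $Z=\sum_{\gamma\in\Omega}Z_\gamma$ and $P(\gamma)=Z_\gamma/Z$. For a finite list $R$ of elements of $N$ (repetitions allowed) set $\sigma^R=\prod_{i\in R}\sigma_i$ (product over the list with multiplicity, $\sigma^\emptyset\equiv1$), where $\sigma_i(\gamma)=(\sigma_i)_\gamma$ is the $i$-th coordinate of $\gamma$. Then for every such list $R$, $$\langle\sigma^R\rangle=\sum_{\gamma\in\Omega}(\sigma^R)_\gamma P(\gamma)\ \ge 0.$$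
   Context: This is a generalized ferromagnetic $q$-state Potts model with multi-spin interactions, with spin values taken in the centered set $F^c$ (equivalently, $\sigma_i$ is the Potts spin in $\{1,\dots,q\}$ minus $(q+1)/2$); the inverse temperature is set to $1$. The paper formally also permits $J_A=+\infty$. *)

From HB Require Import structures.
From mathcomp Require Import all_boot all_order all_algebra.
From mathcomp Require Import reals.
From mathcomp Require Import sequences exp.
Set Implicit Arguments. Unset Strict Implicit. Unset Printing Implicit Defensive.
Import Order.TTheory GRing.Theory Num.Theory.
Local Open Scope ring_scope.

(* Configurations: gamma : {ffun 'I_n -> 'I_q}; Potts value k in {0..q-1}
   (i.e. the usual 1..q shifted by one), centred spin value in F^c. *)
Definition config (n q : nat) := {ffun 'I_n -> 'I_q}.

Definition spinc (R : realType) (q : nat) (k : 'I_q) : R :=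
  k%:R - (q%:R - 1) / 2.

Definition deltaA (n q : nat) (A : {set 'I_n}) (g : config n q) : bool :=
  [forall i in A, forall j in A, g i == g j].

Definition Ham (R : realType) (n q : nat) (J : {set 'I_n} -> R)
  (g : config n q) : R :=
  - \sum_(A : {set 'I_n} | (2 <= #|A|)%N) (J A * (deltaA A g)%:R)%R.

Definition Zg (R : realType) (n q : nat) (J : {set 'I_n} -> R)
  (g : config n q) : R := expR (- Ham J g).

Definition Zpart (R : realType) (n q : nat) (J : {set 'I_n} -> R) : R :=
  \sum_(g : config n q) Zg J g.

Definition Prob (R : realType) (n q : nat) (J : {set 'I_n} -> R)
  (g : config n q) : R := Zg J g / Zpart q J.

Definition sigmaR (R : realType) (n q : nat) (L : seq 'I_n)
  (g : config n q) : R := \prod_(i <- L) spinc R (g i).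

Definition expect (R : realType) (n q : nat) (J : {set 'I_n} -> R)
  (L : seq 'I_n) : R :=
  \sum_(g : config n q) sigmaR R L g * Prob J g.

From HB Require Import structures.
From mathcomp Require Import all_boot all_order all_algebra.
From mathcomp Require Import reals.
From mathcomp Require Import sequences exp.
From mathcomp Require Import ring lra.
Set Implicit Arguments. Unset Strict Implicit. Unset Printing Implicit Defensive.
Import Order.TTheory GRing.Theory Num.Theory.
Local Open Scope ring_scope.

(* Writing x_A^delta = 1 + (x_A - 1) delta with x_A - 1 >= 0 and expanding the
   product, Z_gamma becomes a nonnegative combination of products of deltas, so
   it suffices to show that the sum of sigma^R over the configurations meeting
   a family T of equality constraints is nonnegative.  The constraints split
   the sites into linked classes.  If some class occurs an odd number of times
   in R, reversing every spin of that class (k |-> q-1-k, i.e. s |-> -s on F^c)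
   is an involution of the constrained configurations negating sigma^R, so the
   sum vanishes; otherwise sigma^R is a product of even powers. *)

Section ExpandProduct.
Variables (R : realDomainType) (G : finType) (I : Type).
Variables (f : G -> R) (w : I -> G -> R).
Hypothesis sum_prod_ge0 : forall T : seq I, 0 <= \sum_g f g * \prod_(i <- T) w i g.

Lemma sum_prod_1Dw_ge0 (P : pred I) (c : I -> R) (r : seq I) :
  (forall i, P i -> 0 <= c i) ->
  0 <= \sum_g f g * \prod_(i <- r | P i) (1 + c i * w i g).
Proof.
move=> c_ge0.
suff /(_ [::]) : forall T, 0 <= \sum_g f g *
    (\prod_(i <- r | P i) (1 + c i * w i g) * \prod_(i <- T) w i g).
  by under eq_bigr do rewrite big_nil mulr1.
elim: r => [|a r IHr] T.
  by under eq_bigr do rewrite big_nil mul1r.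
case Pa: (P a); under eq_bigr do rewrite big_cons Pa; last exact: IHr.
set X := fun g => \prod_(i <- r | P i) (1 + c i * w i g).
have expand_a g : f g * ((1 + c a * w a g) * X g * \prod_(i <- T) w i g) =
    f g * (X g * \prod_(i <- T) w i g) +
    c a * (f g * (X g * \prod_(i <- a :: T) w i g)).
  by rewrite big_cons; ring.
under eq_bigr do rewrite expand_a.
rewrite big_split /= -mulr_sumr addr_ge0 ?mulr_ge0 ?c_ge0 //; exact: IHr.
Qed.

End ExpandProduct.

Section EvenClassProduct.
Variables (R : realDomainType) (I : eqType) (e : rel I) (f : I -> R).
Hypotheses (e_refl : reflexive e) (e_sym : symmetric e) (e_trans : transitive e).
Hypothesis f_class : forall i j, e i j -> f i = f j.

Lemma prod_even_classes_ge0 (L : seq I) :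
  (forall i, ~~ odd (count (e i) L)) -> 0 <= \prod_(i <- L) f i.
Proof.
elim: {L}(size L).+1 {-2}L (ltnSn (size L)) => // m IHm [|a L] szL evenL.
  by rewrite big_nil.
rewrite (bigID (e a)) /= mulr_ge0 //.
  rewrite (eq_bigr (fun=> f a)) => [|j /f_class //].
  by rewrite big_const_seq iter_mulr_1 exprn_even_ge0.
rewrite -big_filter IHm => [//||i].
  by rewrite size_filter /= e_refl (leq_ltn_trans (count_size _ _)).
rewrite count_filter; have [eia|Neia] := boolP (e i a).
  rewrite (eq_count (a2 := pred0)) ?count_pred0 // => j /=.
  apply/negbTE/nandP; case eij: (e i j); [right | by left].
  by rewrite negbK (e_trans _ eij) // e_sym.
rewrite (eq_count (a2 := e i)) // => j /=.
apply/andb_idr => eij; apply: contra Neia => eaj.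
by rewrite (e_trans eij) // e_sym.
Qed.

End EvenClassProduct.

Definition deltaAs (n q : nat) (T : seq {set 'I_n}) (g : config n q) : bool :=
  all (fun A => deltaA A g) T.

(* Linked sites carry equal spins in every configuration meeting T; defining
   the relation this way makes it an equivalence for free. *)
Definition linked (n q : nat) (T : seq {set 'I_n}) (a b : 'I_n) : bool :=
  [forall g : config n q, deltaAs T g ==> (g a == g b)].

Section LinkedClasses.
Variables (n q : nat) (T : seq {set 'I_n}).

Lemma linkedP (g : config n q) a b :
  deltaAs T g -> linked q T a b -> g a = g b.
Proof. by move=> Tg /forallP/(_ g)/implyP/(_ Tg)/eqP. Qed.

Lemma linked_refl : reflexive (linked q T).
Proof. by move=> a; apply/forall_inP. Qed.

Lemma linked_sym : symmetric (linked q T).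
Proof.
by move=> a b; apply/forall_inP/forall_inP => ab g /ab; rewrite eq_sym.
Qed.

Lemma linked_trans : transitive (linked q T).
Proof.
move=> b a c ab bc; apply/forall_inP => g Tg.
by rewrite (linkedP Tg ab) (linkedP Tg bc).
Qed.

Lemma linked_deltaA A a b : A \in T -> a \in A -> b \in A -> linked q T a b.
Proof.
move=> TA aA bA; apply/forall_inP => g /allP/(_ A TA) /forall_inP/(_ a aA).
by move/forall_inP/(_ b bA).
Qed.

Definition flip_class (i0 : 'I_n) (g : config n q) : config n q :=
  [ffun k => if linked q T i0 k then rev_ord (g k) else g k].

Lemma flip_classK i0 : involutive (flip_class i0).
Proof.
move=> g; apply/ffunP => k; rewrite !ffunE.
by case: (linked q T i0 k); rewrite ?rev_ordK.
Qed.

(* A constraint set A lies inside a single linked class, so it is flipped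
   either entirely or not at all. *)
Lemma deltaAs_flip_class i0 g : deltaAs T g -> deltaAs T (flip_class i0 g).
Proof.
move=> Tg; apply/allP => A TA; apply/forall_inP => a aA; apply/forall_inP => b bA.
have ab := linked_deltaA TA aA bA.
have i0b : linked q T i0 b = linked q T i0 a.
  by apply/idP/idP => [/linked_trans->//|/linked_trans->//]; rewrite linked_sym.
by rewrite !ffunE i0b (linkedP Tg ab).
Qed.

End LinkedClasses.

Lemma spinc_rev_ord (R : realType) q (k : 'I_q) :
  spinc R (rev_ord k) = - spinc R k.
Proof. by rewrite /spinc /= natrB ?ltn_ord // -addn1 natrD; field. Qed.

Lemma sigmaR_flip_class (R : realType) n q T i0 (g : config n q) L :
  sigmaR R L (flip_class T i0 g) =
  (-1) ^+ count (linked q T i0) L * sigmaR R L g.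
Proof.
rewrite /sigmaR; elim: L => [|a L IHL]; first by rewrite !big_nil mulr1.
rewrite !big_cons IHL /= ffunE; case: ifP => _.
  by rewrite spinc_rev_ord exprS mulN1r !mulNr mulrCA.
by rewrite add0n mulrCA.
Qed.

Lemma sum_deltaAs_sigmaR_ge0 (R : realType) n q T (L : seq 'I_n) :
  0 <= \sum_(g : config n q | deltaAs T g) sigmaR R L g.
Proof.
case: (pickP (fun i => odd (count (linked q T i) L))) => [i0 oddL|evenL].
  set S := \sum_(g | _) _.
  suff : S = - S by lra.
  rewrite {1}/S (reindex_inj (can_inj (flip_classK T i0))) -sumrN.
  apply: eq_big => [g|g _].
    apply/idP/idP => [/(deltaAs_flip_class i0)|]; last exact: deltaAs_flip_class.
    by rewrite flip_classK.
  by rewrite sigmaR_flip_class -signr_odd oddL mulN1r.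
apply: sumr_ge0 => g Tg; apply: (prod_even_classes_ge0 (e := linked q T)).
- exact: linked_refl.
- exact: linked_sym.
- exact: linked_trans.
- by move=> i j /(linkedP Tg) ->.
- by move=> i; rewrite evenL.
Qed.

Lemma prod_deltaA (R : realType) n q T (g : config n q) :
  \prod_(A <- T) ((deltaA A g)%:R : R) = (deltaAs T g)%:R.
Proof.
elim: T => [|A T IHT]; first by rewrite big_nil.
by rewrite big_cons IHT /deltaAs /=; case: (deltaA A g); rewrite ?mul1r ?mul0r.
Qed.

Lemma sum_sigmaR_prod_deltaA (R : realType) n q T (L : seq 'I_n) :
  \sum_(g : config n q) sigmaR R L g * \prod_(A <- T) (deltaA A g)%:R =
  \sum_(g : config n q | deltaAs T g) sigmaR R L g.
Proof.
rewrite [RHS]big_mkcond; apply: eq_bigr => g _.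
by rewrite prod_deltaA; case: deltaAs; rewrite ?mulr1 ?mulr0.
Qed.

Lemma Zg_prod (R : realType) n q (J : {set 'I_n} -> R) (g : config n q) :
  Zg J g = \prod_(A : {set 'I_n} | (2 <= #|A|)%N) (1 + (expR (J A) - 1) * (deltaA A g)%:R).
Proof.
rewrite /Zg /Ham opprK expR_sum; apply: eq_bigr => A _.
by case: (deltaA A g); rewrite ?mulr1 ?mulr0 ?expR0 ?addr0 // addrC subrK.
Qed.

Theorem theorem1 (R : realType) (n q : nat) (hq : (2 <= q)%N) (hn : (1 <= n)%N)
  (J : {set 'I_n} -> R)
  (hJ : forall A : {set 'I_n}, (2 <= #|A|)%N -> 0 <= J A)
  (L : seq 'I_n) :
  0 <= expect q J L.
Proof.
rewrite /expect /Prob; under eq_bigr do rewrite mulrA.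
rewrite -mulr_suml divr_ge0 //; last by apply: sumr_ge0 => g _; exact: expR_ge0.
under eq_bigr do rewrite Zg_prod.
apply: sum_prod_1Dw_ge0 => [T|A /hJ JA_ge0].
  by rewrite sum_sigmaR_prod_deltaA sum_deltaAs_sigmaR_ge0.
by have := expR_ge1Dx (J A); lra.
Qed.
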